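(* Let $\mathcal T$ be a finite rooted tree of depth at most $L$, where $L\ge1$ is an integer. Let $\Delta\ge1$ and $s\ge0$. Let $W$ be a subset of the internal (non-leaf) vertices of $\mathcal T$ such that each internal vertex not in $W$ has at least $\Delta$ children, and each path from the root contains at most $s$ vertices of $W$. Then there is some $T\in\{0,\dots,L\}$ for which the number of leaves of $\mathcal T$ at depth $T$ is at least $L^{-1}\Delta^{T-s}$.
   Context: The depth of a vertex is its distance from the root. *)

From HB Require Import structures.
From mathcomp Require Import all_boot all_order all_algebra.
Set Implicit Arguments. Unset Strict Implicit. Unset Printing Implicit Defensive.
Import Order.TTheory GRing.Theory Num.Theory.

(* A finite rooted tree; each vertex carries a boolean mark telling whether
   it belongs to the distinguished set W.  The children of a vertex are
   listed in a sequence (their order is irrelevant). *)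
Inductive tree : Type := Node : bool -> seq tree -> tree.

Definition children (t : tree) : seq tree := let: Node _ ts := t in ts.
Definition inW (t : tree) : bool := let: Node b _ := t in b.

Fixpoint height (t : tree) : nat :=
  let: Node _ ts := t in
  if ts is [::] then 0 else (foldr maxn 0 (map height ts)).+1.

Fixpoint leaves_at (t : tree) (d : nat) : nat :=
  let: Node _ ts := t in
  match d with
  | 0 => if ts is [::] then 1 else 0
  | d'.+1 => sumn (map (fun u => leaves_at u d') ts)
  end.

Fixpoint maxW (t : tree) : nat :=
  let: Node b ts := t in b + foldr maxn 0 (map maxW ts).

Fixpoint W_ok (R : numDomainType) (Delta : R) (t : tree) : bool :=
  let: Node b ts := t in
  (if ts is [::] then ~~ b else b || (Delta <= (size ts)%:R)%R)
  && all (W_ok Delta) ts.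

From HB Require Import structures.
From mathcomp Require Import all_boot all_order all_algebra.
Set Implicit Arguments. Unset Strict Implicit. Unset Printing Implicit Defensive.
Import Order.TTheory GRing.Theory Num.Theory.
Local Open Scope ring_scope.

(* Weight each leaf at depth d by Delta^-d.  By induction on the tree, the leaves
   of depth < n have total weight at least Delta^-(maxW t) once height t < n: the
   factor Delta^-1 lost in passing to the subtrees is compensated by the at least
   Delta children of a vertex outside W, and paid by one unit of maxW at a vertex
   of W.  If the root is not a leaf, this weight >= Delta^-s is spread over the L
   depths 1..L, so some depth T carries at least Delta^-s / L of it, i.e. at least
   Delta^(T-s) / L leaves. *)

Lemma all_leq_foldr_maxn (T : Type) (f : T -> nat) (s : seq T) :
  all (fun x => f x <= foldr maxn 0 (map f s))%N s.
Proof.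
elim: s => //= x s IH; rewrite leq_maxl /=.
by apply: sub_all IH => y /leq_trans; apply; rewrite leq_maxr.
Qed.

Lemma ler_sum_size (R : numDomainType) (T : Type) (p : pred T) (F : T -> R)
    (c : R) (s : seq T) :
  all p s -> (forall x, p x -> c <= F x) -> (size s)%:R * c <= \sum_(x <- s) F x.
Proof.
move=> + cF; elim: s => [|x s IH] /=; first by rewrite big_nil mul0r.
by case/andP=> px ps; rewrite big_cons -add1n natrD mulrDl mul1r lerD ?cF ?IH.
Qed.

Lemma exists_ge_mean (R : realFieldType) (n : nat) (F : 'I_n -> R) (x : R) :
  (0 < n)%N -> x <= \sum_(i < n) F i -> exists i, x / n%:R <= F i.
Proof.
move=> n_gt0 x_le.
have [/existsP[i Fi] | /existsPn Flt] := boolP [exists i, x / n%:R <= F i].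
  by exists i.
have : \sum_(i < n) F i < \sum_(i < n) x / n%:R.
  apply: ltr_sum => [|i _]; last by rewrite ltNge Flt.
  by apply/hasP; exists (Ordinal n_gt0); rewrite ?mem_index_enum.
have n_neq0 : n%:R != 0 :> R by rewrite pnatr_eq0 -lt0n.
by rewrite sumr_const card_ord -[X in _ < X]mulr_natr (divfK n_neq0) ltNge x_le.
Qed.

Section WeightedLeaves.
Variables (R : realFieldType) (Delta : R).
Hypothesis Delta_ge1 : 1 <= Delta.

Let Delta_gt0 : 0 < Delta.
Proof. exact: lt_le_trans ltr01 Delta_ge1. Qed.

Definition weighted_leaves (t : tree) (n : nat) : R :=
  \sum_(d < n) (leaves_at t d)%:R / Delta ^+ d.

Lemma weighted_leavesS b ts n :
  weighted_leaves (Node b ts) n.+1 =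
  (if ts is [::] then 1 else 0) + Delta^-1 * \sum_(u <- ts) weighted_leaves u n.
Proof.
rewrite /weighted_leaves big_ord_recl /= expr0 divr1; congr (_ + _).
  by case: ts.
rewrite mulr_sumr; under [RHS]eq_bigr do rewrite mulr_sumr.
rewrite [RHS]exchange_big /=; apply: eq_bigr => d _.
rewrite sumnE big_map natr_sum mulr_suml; apply: eq_bigr => u _.
by rewrite /bump /= add1n exprS invfM mulrCA mulrA.
Qed.

Lemma exprV_le m k : (m <= k)%N -> Delta ^- k <= Delta ^- m.
Proof. by move=> mk; rewrite lef_pV2 ?posrE ?exprn_gt0 // ler_weXn2l. Qed.

Lemma branching_factor_le (b : bool) (k : nat) :
  (0 < k)%N -> b || (Delta <= k%:R) -> Delta ^- b <= Delta^-1 * k%:R.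
Proof.
case: b => /= [k_gt0 _ | _ Dk].
  by rewrite expr1 ler_peMr ?ler1n // invr_ge0 ltW.
by rewrite /nat_of_bool expr0 invr1 ler_pdivlMl // mulr1.
Qed.

Lemma weighted_leaves_ge t n : W_ok Delta t -> (height t < n)%N ->
  Delta ^- maxW t <= weighted_leaves t n.
Proof.
elim: n t => [//|n IH] [b ts] /andP[Wroot Wts] ht; rewrite weighted_leavesS.
case: ts => [|v vs] in Wroot Wts ht *.
  by rewrite (negbTE Wroot) /= expr0 invr1 big_nil mulr0 addr0.
set ts := v :: vs in Wroot Wts ht *; set m := foldr maxn 0 (map maxW ts).
have children_ge : (size ts)%:R * Delta ^- m <= \sum_(u <- ts) weighted_leaves u n.
  pose p := predI (predI (W_ok Delta) (fun u => height u < n)%N)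
                  (fun u => maxW u <= m)%N.
  apply: (@ler_sum_size _ _ p) => [|u /andP[/andP[Wu hu] mu]].
    rewrite !all_predI Wts all_leq_foldr_maxn andbT /=.
    by apply: sub_all (all_leq_foldr_maxn height ts) => u /leq_ltn_trans; apply.
  exact: le_trans (exprV_le mu) (IH u Wu hu).
have -> : maxW (Node b ts) = (b + m)%N by [].
rewrite add0r exprD invfM.
apply: le_trans _ (ler_wpM2l _ children_ge); last by rewrite invr_ge0 ltW.
rewrite mulrA ler_wpM2r ?invr_ge0 ?exprn_ge0 ?(ltW Delta_gt0) //.
exact: branching_factor_le.
Qed.

End WeightedLeaves.

Lemma expz_subn (R : fieldType) (x : R) (m n : nat) :
  x != 0 -> x ^ (m%:Z - n%:Z) = x ^+ m * x ^- n.
Proof. by move=> x_neq0; rewrite expfzDr // -exprnN -exprnP. Qed.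

Theorem mainTheorem16 (R : realFieldType) (t : tree) (L s : nat) (Delta : R) :
  (1 <= L)%N -> (height t <= L)%N -> 1 <= Delta ->
  W_ok Delta t -> (maxW t <= s)%N ->
  exists T : nat, (T <= L)%N /\
    (L%:R)^-1 * Delta ^ (T%:Z - s%:Z) <= (leaves_at t T)%:R.
Proof.
move=> L_gt0 hL Delta_ge1 Wt hs.
have Delta_gt0 : 0 < Delta := lt_le_trans ltr01 Delta_ge1.
have kraft : Delta ^- s <= weighted_leaves Delta t L.+1.
  exact: le_trans (exprV_le Delta_ge1 hs) (weighted_leaves_ge Delta_ge1 Wt _).
clear hL hs Wt; case: t kraft => b [|v vs] kraft.
  exists 0%N; split=> //; rewrite expz_subn ?gt_eqF // expr0 mul1r.
  rewrite mulr_ile1 ?invr_ge0 ?ler0n ?exprn_ge0 ?(ltW Delta_gt0) //.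
    by rewrite invf_le1 ?ltr0n ?ler1n.
  by rewrite invf_le1 ?exprn_gt0 ?exprn_ege1.
rewrite /weighted_leaves big_ord_recl [leaves_at _ 0]/= mul0r add0r in kraft.
have [i] := exists_ge_mean L_gt0 kraft.
rewrite ler_pdivlMr ?exprn_gt0 // => Hi.
exists (lift ord0 i); split; first exact: ltn_ord.
by rewrite expz_subn ?gt_eqF // [X in _ * X]mulrC mulrA [_^-1 * _]mulrC.
Qed.
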